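(* If $x\in\mathbb{R}$ satisfies $|x|\le1/8$ or $|x-T\pi|\le1/8$, then $\mathrm{Re}(H(x))\ge1/2$.
   Context: Rudin–Shapiro polynomials: $P_0(z)=Q_0(z)=1$ and for $s\ge0$, $P_{s+1}(z)=P_s(z)+z^{2^s}Q_s(z)$, $Q_{s+1}(z)=P_s(z)-z^{2^s}Q_s(z)$. Let $t$ be an odd positive integer and $T:=2^{t+10}$. For $x\in\mathbb{R}$ define $\alpha(x):=2^{-(t+1)/2}P_t(e^{ix/T})$, $\beta(x):=2^{-(t+1)/2}Q_t(e^{ix/T})$, and $H(x):=e^{ix}\alpha(x)+e^{2ix}\beta(x)$. *)

From Stdlib Require Import Reals.
From Coquelicot Require Import Coquelicot.
Open Scope R_scope.

(* Rudin-Shapiro polynomials, evaluated at a complex point z. *)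
Fixpoint RS (s : nat) (z : C) : C * C :=
  match s with
  | O => (RtoC 1, RtoC 1)
  | S s' => let (p, q) := RS s' z in
            (Cplus p (Cmult (Cpow z (2 ^ s')) q),
             Cminus p (Cmult (Cpow z (2 ^ s')) q))
  end.

Definition RS_P (s : nat) (z : C) : C := fst (RS s z).
Definition RS_Q (s : nat) (z : C) : C := snd (RS s z).

Definition expi (theta : R) : C := (cos theta, sin theta).

Definition Tt (t : nat) : R := 2 ^ (t + 10).

Definition nrm (t : nat) : R := Rpower 2 (- (INR t + 1) / 2).

Definition alpha (t : nat) (x : R) : C :=
  Cmult (RtoC (nrm t)) (RS_P t (expi (x / Tt t))).
Definition beta (t : nat) (x : R) : C :=
  Cmult (RtoC (nrm t)) (RS_Q t (expi (x / Tt t))).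

Definition H (t : nat) (x : R) : C :=
  Cplus (Cmult (expi x) (alpha t x)) (Cmult (expi (2 * x)) (beta t x)).

From Stdlib Require Import Reals Lra Lia.
From Coquelicot Require Import Coquelicot.
Open Scope R_scope.

(* For odd t, two steps of the recursion at z = 1 or z = -1 (where z^(2^s) = 1
   for s >= 1) double both polynomials, so (alpha, beta) equals (1, 0) at x = 0
   and (0, 1) at x = T pi.  On the unit circle |P_s|^2 + |Q_s|^2 = 2^(s+1), and
   with this the recursion makes P_s and Q_s (2 sqrt 2)^(s+1)-Lipschitz; after
   normalisation alpha and beta move by at most 2^(t+1) |x/T - theta| <= 1/4096
   on the two windows.  Hence H(x) is within 1/2048 of e^(ix), resp. e^(2ix),
   and these are within 1/4 of 1. *)

Lemma Rabs_sin_le u : Rabs (sin u) <= Rabs u.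
Proof.
  assert (Hnonneg : forall v, 0 <= v -> Rabs (sin v) <= v).
  { intros v Hv. apply Rabs_le.
    destruct (Req_dec v 0) as [-> | Hv0]; [rewrite sin_0; lra|].
    assert (Hlt := sin_lt_x v ltac:(lra)).
    destruct (Rle_lt_dec v PI) as [HvPI | HvPI].
    - assert (0 <= sin v) by (apply sin_ge_0; lra). lra.
    - assert (Hsin := SIN_bound v). assert (Hpi := PI2_1). lra. }
  destruct (Rle_dec 0 u) as [Hu | Hu].
  - rewrite (Rabs_pos_eq u) by exact Hu. now apply Hnonneg.
  - rewrite <- Rabs_Ropp, <- sin_neg, (Rabs_left u) by lra. apply Hnonneg; lra.
Qed.

Lemma Cmod_expi a : Cmod (expi a) = 1.
Proof.
  assert (Hpyth := sin2_cos2 a). unfold Rsqr in Hpyth.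
  unfold Cmod, expi; simpl.
  replace (cos a * (cos a * 1) + sin a * (sin a * 1)) with 1 by lra.
  apply sqrt_1.
Qed.

Lemma expi_0 : expi 0 = 1.
Proof. unfold expi; rewrite cos_0, sin_0; reflexivity. Qed.

Lemma expi_PI : expi PI = RtoC (-1).
Proof. unfold expi; rewrite cos_PI, sin_PI; reflexivity. Qed.

Lemma expi_2_Tt_PI t : expi (2 * (Tt t * PI)) = 1.
Proof.
  unfold expi, Tt. rewrite <- (Rplus_0_l (2 * _)).
  replace (2 ^ (t + 10)) with (INR (2 ^ (t + 10))) by (rewrite pow_INR; reflexivity).
  rewrite <- Rmult_assoc, cos_period, sin_period, cos_0, sin_0. reflexivity.
Qed.

Lemma Cmod_expi_sub a b : Cmod (expi a - expi b) <= Rabs (a - b).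
Proof.
  set (h := (a - b) / 2).
  assert (Hsq : Cmod (expi a - expi b) ^ 2 = (2 * sin h) ^ 2).
  { rewrite Cmod2_alt. unfold expi; simpl.
    assert (Hcos := cos_2a_sin h).
    replace (2 * h) with (a - b) in Hcos by (unfold h; field).
    rewrite cos_minus in Hcos.
    assert (Ha := sin2_cos2 a). assert (Hb := sin2_cos2 b). unfold Rsqr in *.
    nra. }
  assert (Hsin : Rabs (2 * sin h) <= Rabs (a - b)).
  { rewrite Rabs_mult, (Rabs_pos_eq 2) by lra.
    replace (Rabs (a - b)) with (2 * Rabs h)
      by (unfold h; rewrite Rabs_div, (Rabs_pos_eq 2) by lra; field).
    assert (Hs := Rabs_sin_le h). lra. }
  rewrite <- (Rabs_pos_eq (Cmod _)) by apply Cmod_ge_0.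
  eapply Rle_trans; [|exact Hsin].
  apply Rsqr_le_abs_0. unfold Rsqr. simpl in Hsq. lra.
Qed.

Lemma Re_ge_1_sub_Cmod h : 1 - Cmod (h - 1) <= Re h.
Proof.
  assert (Hre := re_le_Cmod (h - 1)). destruct h as [a b]; simpl in *.
  apply Rabs_le_between in Hre. lra.
Qed.

Lemma Cmod_sub_le a b : Cmod (a - b) <= Cmod a + Cmod b.
Proof. unfold Cminus. rewrite <- (Cmod_opp b). apply Cmod_triangle. Qed.

Lemma Cmod_parallelogram a b :
  Cmod (a + b) ^ 2 + Cmod (a - b) ^ 2 = 2 * (Cmod a ^ 2 + Cmod b ^ 2).
Proof. destruct a, b. rewrite !Cmod2_alt. simpl. ring. Qed.

Lemma Cmod_mul_sub_le u v a b :
  Cmod u = 1 -> Cmod (u * a - v * b) <= Cmod (a - b) + Cmod (u - v) * Cmod b.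
Proof.
  intros Hu. replace (u * a - v * b)%C with (u * (a - b) + (u - v) * b)%C by ring.
  eapply Rle_trans; [apply Cmod_triangle|]. rewrite !Cmod_mult, Hu. lra.
Qed.

Lemma Cmod_Cpow_sub_le z w m :
  Cmod z = 1 -> Cmod w = 1 -> Cmod (z ^ m - w ^ m) <= INR m * Cmod (z - w).
Proof.
  intros Hz Hw. induction m as [|m IHm].
  - simpl. replace (1 - 1)%C with (RtoC 0) by ring. rewrite Cmod_0. lra.
  - rewrite !Cpow_S, S_INR.
    eapply Rle_trans; [apply Cmod_mul_sub_le, Hz|].
    rewrite Cmod_pow, Hw, pow1. lra.
Qed.

Lemma RS_P_S s z : RS_P (S s) z = (RS_P s z + z ^ (2 ^ s) * RS_Q s z)%C.
Proof. unfold RS_P, RS_Q; simpl; destruct (RS s z); reflexivity. Qed.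

Lemma RS_Q_S s z : RS_Q (S s) z = (RS_P s z - z ^ (2 ^ s) * RS_Q s z)%C.
Proof. unfold RS_P, RS_Q; simpl; destruct (RS s z); reflexivity. Qed.

Lemma RS_parseval s w :
  Cmod w = 1 -> Cmod (RS_P s w) ^ 2 + Cmod (RS_Q s w) ^ 2 = 2 ^ (s + 1).
Proof.
  intros Hw. induction s as [|s IHs].
  - unfold RS_P, RS_Q; simpl. rewrite Cmod_1. ring.
  - rewrite RS_P_S, RS_Q_S, Cmod_parallelogram, Cmod_mult, Cmod_pow, Hw, pow1,
      Rmult_1_l, IHs.
    rewrite Nat.add_succ_l. simpl. ring.
Qed.

Lemma Cmod_RS_Q_le s w : Cmod w = 1 -> Cmod (RS_Q s w) <= sqrt 2 ^ (s + 1).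
Proof.
  intros Hw. assert (Hpar := RS_parseval s w Hw).
  assert (Hsq : (sqrt 2 ^ (s + 1)) ^ 2 = 2 ^ (s + 1))
    by (rewrite <- pow_mult, Nat.mul_comm, pow_mult, pow2_sqrt by lra; reflexivity).
  assert (0 <= sqrt 2 ^ (s + 1)) by (apply pow_le, sqrt_pos).
  assert (0 <= Cmod (RS_Q s w)) by apply Cmod_ge_0.
  assert (0 <= Cmod (RS_P s w) ^ 2) by apply pow2_ge_0.
  nra.
Qed.

Lemma RS_twist_sub_le s z w : Cmod z = 1 -> Cmod w = 1 ->
  Cmod (z ^ (2 ^ s) * RS_Q s z - w ^ (2 ^ s) * RS_Q s w)
  <= Cmod (RS_Q s z - RS_Q s w) + 2 ^ s * sqrt 2 ^ (s + 1) * Cmod (z - w).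
Proof.
  intros Hz Hw.
  eapply Rle_trans; [apply Cmod_mul_sub_le; rewrite Cmod_pow, Hz; apply pow1|].
  apply Rplus_le_compat_l.
  assert (Hpow := Cmod_Cpow_sub_le z w (2 ^ s) Hz Hw).
  rewrite pow_INR in Hpow. simpl INR in Hpow.
  replace (2 ^ s * sqrt 2 ^ (s + 1) * Cmod (z - w))
    with (2 ^ s * Cmod (z - w) * sqrt 2 ^ (s + 1)) by ring.
  apply Rmult_le_compat; try apply Cmod_ge_0; auto using Cmod_RS_Q_le.
Qed.

Lemma RS_lipschitz s z w : Cmod z = 1 -> Cmod w = 1 ->
  Cmod (RS_P s z - RS_P s w) <= (2 * sqrt 2) ^ (s + 1) * Cmod (z - w) /\
  Cmod (RS_Q s z - RS_Q s w) <= (2 * sqrt 2) ^ (s + 1) * Cmod (z - w).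
Proof.
  intros Hz Hw. assert (Hd := Cmod_ge_0 (z - w)).
  (* The bound propagates because 2 + 1/2 <= 2 sqrt 2. *)
  assert (Hsqrt2 : 5 / 4 <= sqrt 2).
  { rewrite <- (sqrt_Rsqr (5 / 4)) by lra. apply sqrt_le_1_alt. unfold Rsqr. lra. }
  induction s as [|s [IHP IHQ]].
  - unfold RS_P, RS_Q; simpl. replace (1 - 1)%C with (RtoC 0) by ring.
    rewrite Cmod_0. split; nra.
  - assert (Htwist := RS_twist_sub_le s z w Hz Hw).
    set (tw := (z ^ (2 ^ s) * RS_Q s z - w ^ (2 ^ s) * RS_Q s w)%C) in Htwist.
    replace (2 ^ s * sqrt 2 ^ (s + 1) * Cmod (z - w))
      with ((2 * sqrt 2) ^ (s + 1) * Cmod (z - w) / 2) in Htwist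
      by (rewrite Rpow_mult_distr, Nat.add_1_r; simpl; field).
    replace ((2 * sqrt 2) ^ (S s + 1) * Cmod (z - w))
      with (2 * sqrt 2 * ((2 * sqrt 2) ^ (s + 1) * Cmod (z - w)))
      by (rewrite Nat.add_succ_l; simpl; ring).
    set (L := (2 * sqrt 2) ^ (s + 1) * Cmod (z - w)) in *.
    assert (HL : 0 <= L) by (apply Rmult_le_pos; [apply pow_le|]; lra).
    rewrite !RS_P_S, !RS_Q_S. split.
    + replace (RS_P s z + z ^ (2 ^ s) * RS_Q s z - (RS_P s w + w ^ (2 ^ s) * RS_Q s w))%C
        with (RS_P s z - RS_P s w + tw)%C by (unfold tw; ring).
      eapply Rle_trans; [apply Cmod_triangle|]. nra.
    + replace (RS_P s z - z ^ (2 ^ s) * RS_Q s z - (RS_P s w - w ^ (2 ^ s) * RS_Q s w))%C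
        with (RS_P s z - RS_P s w - tw)%C by (unfold tw; ring).
      eapply Rle_trans; [apply Cmod_sub_le|]. nra.
Qed.

Lemma RS_doubling s z : (z ^ (2 ^ s) = 1)%C ->
  RS_P (S (S s)) z = (2 * RS_P s z)%C /\ RS_Q (S (S s)) z = (2 * RS_Q s z)%C.
Proof.
  intros Hz.
  assert (Hz2 : (z ^ (2 ^ S s) = 1)%C)
    by (rewrite Nat.pow_succ_r', Nat.mul_comm, Cpow_mult_r, Hz; apply Cpow_1_l).
  rewrite !RS_P_S, !RS_Q_S, !RS_P_S, Hz2, Hz.
  split; ring.
Qed.

Lemma RS_odd_at_1 k :
  RS_P (2 * k + 1) 1 = RtoC (2 ^ (k + 1)) /\ RS_Q (2 * k + 1) 1 = 0.
Proof.
  induction k as [|k [IHP IHQ]].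
  - unfold RS_P, RS_Q; simpl. split; apply injective_projections; simpl; ring.
  - replace (2 * S k + 1)%nat with (S (S (2 * k + 1))) by lia.
    destruct (RS_doubling (2 * k + 1) 1 (Cpow_1_l _)) as [-> ->].
    rewrite IHP, IHQ, Nat.add_succ_l. simpl pow. rewrite RtoC_mult.
    split; ring.
Qed.

Lemma RS_odd_at_m1 k :
  RS_P (2 * k + 1) (RtoC (-1)) = 0 /\ RS_Q (2 * k + 1) (RtoC (-1)) = RtoC (2 ^ (k + 1)).
Proof.
  induction k as [|k [IHP IHQ]].
  - unfold RS_P, RS_Q; simpl. split; apply injective_projections; simpl; ring.
  - replace (2 * S k + 1)%nat with (S (S (2 * k + 1))) by lia.
    assert (Heven : (RtoC (-1) ^ (2 ^ (2 * k + 1)) = 1)%C).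
    { rewrite Nat.add_1_r, Nat.pow_succ_r', <- RtoC_pow, pow_1_even. reflexivity. }
    destruct (RS_doubling (2 * k + 1) _ Heven) as [-> ->].
    rewrite IHP, IHQ, Nat.add_succ_l. simpl pow. rewrite RtoC_mult.
    split; ring.
Qed.

Lemma nrm_pos t : 0 < nrm t.
Proof. apply exp_pos. Qed.

Lemma nrm_sqrt2 t : nrm t = / sqrt 2 ^ (t + 1).
Proof.
  unfold nrm. rewrite <- (Rpower_sqrt 2) by lra.
  rewrite <- Rpower_pow by apply exp_pos.
  rewrite <- Rpower_Ropp, Rpower_mult, plus_INR. simpl INR.
  f_equal. field.
Qed.

Lemma nrm_odd k : nrm (2 * k + 1) = / 2 ^ (k + 1).
Proof.
  rewrite nrm_sqrt2. replace (2 * k + 1 + 1)%nat with (2 * (k + 1))%nat by lia.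
  rewrite pow_mult, pow2_sqrt by lra. reflexivity.
Qed.

Lemma nrm_RS_odd_at_1 k :
  (nrm (2 * k + 1) * RS_P (2 * k + 1) 1 = 1)%C /\
  (nrm (2 * k + 1) * RS_Q (2 * k + 1) 1 = 0)%C.
Proof.
  destruct (RS_odd_at_1 k) as [-> ->]. rewrite nrm_odd. split.
  - rewrite <- RtoC_mult, Rinv_l; [reflexivity | apply pow_nonzero; lra].
  - ring.
Qed.

Lemma nrm_RS_odd_at_m1 k :
  (nrm (2 * k + 1) * RS_P (2 * k + 1) (RtoC (-1)) = 0)%C /\
  (nrm (2 * k + 1) * RS_Q (2 * k + 1) (RtoC (-1)) = 1)%C.
Proof.
  destruct (RS_odd_at_m1 k) as [-> ->]. rewrite nrm_odd. split.
  - ring.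
  - rewrite <- RtoC_mult, Rinv_l; [reflexivity | apply pow_nonzero; lra].
Qed.

Lemma alpha_beta_near t x theta : Rabs (x - Tt t * theta) <= 1 / 8 ->
  Cmod (alpha t x - nrm t * RS_P t (expi theta)) <= 1 / 4096 /\
  Cmod (beta t x - nrm t * RS_Q t (expi theta)) <= 1 / 4096.
Proof.
  intros Hx. set (z := expi (x / Tt t)). set (w := expi theta).
  assert (HT : Tt t = 2 ^ (t + 1) * 512)
    by (unfold Tt; replace (t + 10)%nat with (t + 1 + 9)%nat by lia;
        rewrite pow_add; simpl; ring).
  assert (H2t : 0 < 2 ^ (t + 1)) by (apply pow_lt; lra).
  assert (Hzw : 2 ^ (t + 1) * Cmod (z - w) <= 1 / 4096).
  { eapply Rle_trans; [apply Rmult_le_compat_l; [lra | apply Cmod_expi_sub]|].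
    replace (x / Tt t - theta) with ((x - Tt t * theta) / Tt t) by (field; lra).
    rewrite Rabs_div, (Rabs_pos_eq (Tt t)) by lra.
    set (r := Rabs (x - Tt t * theta)) in *. rewrite HT.
    replace (2 ^ (t + 1) * (r / (2 ^ (t + 1) * 512))) with (r / 512) by (field; lra).
    lra. }
  assert (Hscale : nrm t * (2 * sqrt 2) ^ (t + 1) = 2 ^ (t + 1)).
  { rewrite nrm_sqrt2, Rpow_mult_distr. field.
    apply pow_nonzero. apply Rgt_not_eq, sqrt_lt_R0. lra. }
  assert (Hnorm : forall a b : C, Cmod (a - b) <= (2 * sqrt 2) ^ (t + 1) * Cmod (z - w) ->
            Cmod (nrm t * a - nrm t * b) <= 1 / 4096).
  { intros a b Hab. replace (nrm t * a - nrm t * b)%C with (nrm t * (a - b))%C by ring.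
    rewrite Cmod_mult, Cmod_R, Rabs_pos_eq by (left; apply nrm_pos).
    assert (Hn := nrm_pos t).
    apply Rmult_le_compat_l with (r := nrm t) in Hab; [nra | lra]. }
  destruct (RS_lipschitz t z w (Cmod_expi _) (Cmod_expi _)) as [HP HQ].
  split; apply Hnorm; assumption.
Qed.

Lemma H_sub_1_le t x theta : Rabs (x - Tt t * theta) <= 1 / 8 ->
  Cmod (H t x - 1) <= 1 / 2048 +
    Cmod (expi x * (nrm t * RS_P t (expi theta))
          + expi (2 * x) * (nrm t * RS_Q t (expi theta)) - 1).
Proof.
  intros Hx. destruct (alpha_beta_near t x theta Hx) as [Ha Hb].
  unfold H.
  set (a0 := (nrm t * RS_P t (expi theta))%C) in *.
  set (b0 := (nrm t * RS_Q t (expi theta))%C) in *.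
  replace (_ - 1)%C with (expi x * (alpha t x - a0) + expi (2 * x) * (beta t x - b0)
                          + (expi x * a0 + expi (2 * x) * b0 - 1))%C by ring.
  eapply Rle_trans; [apply Cmod_triangle|].
  assert (Hsum := Cmod_triangle (expi x * (alpha t x - a0)) (expi (2 * x) * (beta t x - b0))).
  rewrite !Cmod_mult, !Cmod_expi in Hsum. lra.
Qed.

Theorem lemma3p9 (t : nat) (ht : Nat.odd t = true) (x : R)
  (hx : Rabs x <= 1 / 8 \/ Rabs (x - Tt t * PI) <= 1 / 8) :
  Re (H t x) >= 1 / 2.
Proof.
  cut (Cmod (H t x - 1) <= 1 / 2).
  { intros Hclose. assert (Hre := Re_ge_1_sub_Cmod (H t x)). lra. }
  destruct (proj1 (Nat.odd_spec t) ht) as [k ->].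
  destruct hx as [hx | hx].
  - assert (hx0 : Rabs (x - Tt (2 * k + 1) * 0) <= 1 / 8)
      by (rewrite Rmult_0_r, Rminus_0_r; exact hx).
    eapply Rle_trans; [exact (H_sub_1_le _ _ _ hx0)|].
    rewrite expi_0. destruct (nrm_RS_odd_at_1 k) as [-> ->].
    replace (expi x * 1 + expi (2 * x) * 0 - 1)%C with (expi x - expi 0)%C
      by (rewrite expi_0; ring).
    assert (Hexp := Cmod_expi_sub x 0). rewrite Rminus_0_r in Hexp. lra.
  - eapply Rle_trans; [exact (H_sub_1_le _ _ _ hx)|].
    rewrite expi_PI. destruct (nrm_RS_odd_at_m1 k) as [-> ->].
    replace (expi x * 0 + expi (2 * x) * 1 - 1)%C
      with (expi (2 * x) - expi (2 * (Tt (2 * k + 1) * PI)))%C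
      by (rewrite expi_2_Tt_PI; ring).
    assert (Hexp := Cmod_expi_sub (2 * x) (2 * (Tt (2 * k + 1) * PI))).
    rewrite <- Rmult_minus_distr_l, Rabs_mult, (Rabs_pos_eq 2) in Hexp by lra.
    lra.
Qed.
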